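(* Let $G$ be a graph and let $(P,z)$ be a near-obstruction in $G$. Then the subgraph of $G$ induced by $V(P)\cup\{z\}$ contains an induced subgraph that is a Meyniel obstruction.
   Context: A path $v_0$-$v_1$-$\cdots$-$v_p$ consists of distinct vertices with $v_jv_{j+1}$ edges for all $j$; a chord is an edge of $G$ between two non-consecutive vertices of the path. A near-obstruction in $G$ is a pair $(P,z)$ where $P=v_0$-$\cdots$-$v_p$ is a path in $G$ with $p\ge 3$ odd, $P$ has at most one chord and such a chord (if any) is $v_{t-1}v_{t+1}$ with $0<t<p-1$, $z$ is a vertex of $G$ not on $P$ adjacent to both $v_0$ and $v_p$, and one of the following holds: (Type 1) $v_0v_2$ is the only chord of $P$ and $z$ is adjacent to neither $v_1$ nor $v_2$; (Type 2) $v_1v_3$ is the only chord of $P$ and $z$ is non-adjacent to at least one of $v_1,v_3$; (Type 3) $v_0v_2$ is not a chord of $P$ and $z$ is not adjacent to $v_1$; (Type 4) neither $v_0v_2$ nor $v_1v_3$ is a chord of $P$, and $z$ is adjacent to $v_1$ and not to $v_2$. A Meyniel obstruction is an odd cycle with at least five vertices and at most one chord. *)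

(* a finite simple graph is a symmetric irreflexive
   relation e on a finType T. *)
From mathcomp Require Import all_boot.
Set Implicit Arguments. Unset Strict Implicit. Unset Printing Implicit Defensive.

Section Defs.
Variable T : finType.
Variable e : rel T.

Definition is_path (v : nat -> T) (p : nat) : Prop :=
  (forall i j, i <= p -> j <= p -> v i = v j -> i = j) /\
  (forall i, i < p -> e (v i) (v i.+1)).

Definition path_chord (v : nat -> T) (p i j : nat) : Prop :=
  [/\ i.+1 < j, j <= p & e (v i) (v j)].

Definition on_path (v : nat -> T) (p : nat) (x : T) : Prop :=
  exists2 i, i <= p & v i = x.

Definition only_chord (v : nat -> T) (p a b : nat) : Prop :=
  path_chord v p a b /\ (forall i j, path_chord v p i j -> i = a /\ j = b).

Definition near_obstruction (v : nat -> T) (p : nat) (z : T) : Prop :=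
  [/\ is_path v p, 3 <= p, odd p &
    [/\
      (forall i j i' j', path_chord v p i j -> path_chord v p i' j' ->
                         i = i' /\ j = j'),
      (forall i j, path_chord v p i j ->
         exists t, [/\ 0 < t, t < p.-1, i = t.-1 & j = t.+1]),
      [/\ ~ on_path v p z, e z (v 0) & e z (v p)] &
      [\/
          [/\ only_chord v p 0 2, ~~ e z (v 1) & ~~ e z (v 2)],
          only_chord v p 1 3 /\ (~~ e z (v 1) \/ ~~ e z (v 3)),
          ~ path_chord v p 0 2 /\ ~~ e z (v 1) |
          [/\ ~ path_chord v p 0 2, ~ path_chord v p 1 3,
              e z (v 1) & ~~ e z (v 2)]]]].

Definition is_cycle (c : nat -> T) (k : nat) : Prop :=
  [/\ 3 <= k,
      (forall i j, i < k -> j < k -> c i = c j -> i = j) &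
      (forall i, i < k -> e (c i) (c (i.+1 %% k)))].

Definition cycle_chord (c : nat -> T) (k i j : nat) : Prop :=
  [/\ i.+1 < j, j < k, ~ (i = 0 /\ j = k.-1) & e (c i) (c j)].

Definition meyniel_obstruction (c : nat -> T) (k : nat) : Prop :=
  [/\ is_cycle c k, odd k, 5 <= k &
      (forall i j i' j', cycle_chord c k i j -> cycle_chord c k i' j' ->
                         i = i' /\ j = j')].

End Defs.

(* Let b be the least odd index with z adjacent to v_b, and a < b the last
   neighbour of z before it; a is even. If b - a >= 3, then z, v_a, ..., v_b is
   an odd cycle whose only possible chord is the chord of P. Otherwise z v_a v_b
   is a triangle, and one moves to the previous or next neighbour of z,
   possibly using the chord v_(t-1) v_(t+1) of P to skip v_t and fix the
   parity; the four types rule out the configurations at the start of P where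
   this fails. Each cycle obtained is z followed by an increasing
   sequence of vertices of P, and is a Meyniel obstruction as soon as z has at
   most one neighbour inside the sequence, the sequence has at most one chord,
   and not both happen. *)

From mathcomp Require Import all_boot zify.
From Stdlib Require Import Classical_Prop.

Set Implicit Arguments. Unset Strict Implicit. Unset Printing Implicit Defensive.

Lemma ex_last_before (P : pred nat) n : P 0 -> 0 < n ->
  exists a, [/\ a < n, P a & forall y, a < y < n -> ~~ P y].
Proof.
move=> P0 n_gt0.
have exP : exists i, (fun i => P i && (i < n)) i by exists 0; rewrite P0.
have ub : forall i, P i && (i < n) -> i <= n by move=> i /andP[_ /ltnW].
have [a /andP[Pa a_lt] a_max] := ex_maxnP exP ub.
exists a; split=> // y /andP[a_lt_y y_lt]; apply/negP=> Py.
by have := a_max y; rewrite Py y_lt => /(_ isT); lia.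
Qed.

Lemma ex_first_after (P : pred nat) n q : P q -> n < q ->
  exists d, [/\ n < d <= q, P d & forall y, n < y < d -> ~~ P y].
Proof.
move=> Pq n_lt_q.
have exP : exists i, (fun i => (n < i) && P i) i by exists q; rewrite n_lt_q Pq.
have [d /andP[n_lt_d Pd] d_min] := ex_minnP exP.
exists d; split=> //; first by rewrite n_lt_d d_min // n_lt_q Pq.
move=> y /andP[n_lt_y y_lt]; apply/negP=> Py.
by have := d_min y; rewrite n_lt_y Py => /(_ isT); lia.
Qed.

Section ApexCycle.
Variables (T : finType) (e : rel T).
Hypothesis e_sym : symmetric e.
Variables (z : T) (u : nat -> T) (m : nat).

Definition apex_cycle (i : nat) : T := if i is s.+1 then u s else z.

Hypothesis u_inj : forall s s', s < m -> s' < m -> u s = u s' -> s = s'.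
Hypothesis u_edge : forall s, s.+1 < m -> e (u s) (u s.+1).
Hypothesis u_neq_z : forall s, s < m -> u s <> z.
Hypothesis z_u_first : e z (u 0).
Hypothesis z_u_last : e z (u m.-1).
Hypothesis m_even : ~~ odd m.
Hypothesis m_ge4 : 4 <= m.
Hypothesis z_chord_unique : forall s s', 0 < s < m.-1 -> 0 < s' < m.-1 ->
  e z (u s) -> e z (u s') -> s = s'.
Hypothesis u_chord_unique : forall s1 s1' s2 s2', s1.+1 < s1' < m -> s2.+1 < s2' < m ->
  e (u s1) (u s1') -> e (u s2) (u s2') -> s1 = s2 /\ s1' = s2'.
Hypothesis z_chord_excl : forall s s1 s1', 0 < s < m.-1 -> e z (u s) ->
  s1.+1 < s1' < m -> ~~ e (u s1) (u s1').

Lemma apex_cycle_is_cycle : is_cycle e apex_cycle m.+1.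
Proof.
split; first lia.
- case=> [|i] [|j] //= i_lt j_lt.
  + by move/esym/u_neq_z => /(_ j_lt).
  + by move/u_neq_z => /(_ i_lt).
  + by move/u_inj => ->.
- move=> i; rewrite ltnS leq_eqVlt => /predU1P[->|i_lt].
    by rewrite modnn /= e_sym; case: (m) z_u_last m_ge4.
  by rewrite modn_small //; case: i i_lt => [|i] //= i_lt; apply: u_edge.
Qed.

Lemma apex_cycle_chord i j : cycle_chord e apex_cycle m.+1 i j ->
  (i = 0 /\ exists2 s, j = s.+1 & 0 < s < m.-1 /\ e z (u s)) \/
  exists s1 s, [/\ i = s1.+1, j = s.+1, s1.+1 < s < m & e (u s1) (u s)].
Proof.
case: i j => [|s1] [|s] [ij j_lt ends /= e_ij] //.
  by left; split=> //; exists s => //; split=> //; lia.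
by right; exists s1, s; split=> //; lia.
Qed.

Lemma apex_cycle_meyniel : meyniel_obstruction e apex_cycle m.+1.
Proof.
split; [exact: apex_cycle_is_cycle | by rewrite oddS m_even | lia |].
move=> i j i' j' /apex_cycle_chord[[-> [s -> [s_int zs]]]|[s1 [s [-> -> s_lt us]]]]
                 /apex_cycle_chord[[-> [s' -> [s'_int zs']]]|[s2 [s' [-> -> s'_lt us']]]].
- by rewrite (z_chord_unique s_int s'_int zs zs').
- by move: us' (z_chord_excl s_int zs s'_lt) => ->.
- by move: us (z_chord_excl s'_int zs' s_lt) => ->.
- by have [-> ->] := u_chord_unique s_lt s'_lt us us'.
Qed.

End ApexCycle.

Section NearObstruction.
Variables (T : finType) (e : rel T).
Hypothesis e_sym : symmetric e.
Variables (v : nat -> T) (p : nat) (z : T).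
Hypothesis path_inj : forall i j, i <= p -> j <= p -> v i = v j -> i = j.
Hypothesis path_edge : forall i, i < p -> e (v i) (v i.+1).
Hypothesis z_off_path : ~ on_path v p z.
Hypothesis chord_unique : forall i j i' j',
  path_chord e v p i j -> path_chord e v p i' j' -> i = i' /\ j = j'.

Local Notation nbr k := (e z (v k)).

(* [lia] would case split on every adjacency fact in the context, which is very slow. *)
Local Ltac arith := repeat match goal with H : context [e _ _] |- _ => clear H end; lia.

Definition has_meyniel_obstruction : Prop :=
  exists (c : nat -> T) (k : nat),
    meyniel_obstruction e c k /\ (forall i, i < k -> on_path v p (c i) \/ c i = z).

Lemma subpath_obstruction (w : nat -> nat) (m : nat) :
  (forall s, s < m -> w s <= p) ->
  (forall s s', s < s' < m -> w s < w s') ->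
  (forall s, s.+1 < m -> e (v (w s)) (v (w s.+1))) ->
  nbr (w 0) -> nbr (w m.-1) -> ~~ odd m -> 4 <= m ->
  (forall s s', 0 < s < m.-1 -> 0 < s' < m.-1 -> nbr (w s) -> nbr (w s') -> s = s') ->
  (forall s s1 s1', 0 < s < m.-1 -> nbr (w s) -> s1.+1 < s1' < m ->
     ~ path_chord e v p (w s1) (w s1')) ->
  has_meyniel_obstruction.
Proof.
move=> w_le w_mono w_edge z_w_first z_w_last m_even m_ge4 z_chord_unique z_chord_excl.
have w_inj s s' : s < m -> s' < m -> w s = w s' -> s = s'.
  move=> s_lt s'_lt ww; case: (ltngtP s s') => // lt_ss'.
  - by have := w_mono s s'; rewrite lt_ss' s'_lt ww ltnn => /(_ isT).
  - by have := w_mono s' s; rewrite lt_ss' s_lt ww ltnn => /(_ isT).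
have w_chord s s' :
    s.+1 < s' < m -> e (v (w s)) (v (w s')) -> path_chord e v p (w s) (w s').
  move=> ss' vv; have := w_mono s s.+1; have := w_mono s.+1 s'; have := w_le s'.
  by split=> //; arith.
exists (apex_cycle z (v \o w)), m.+1; split.
  apply: apex_cycle_meyniel => //=.
  - by move=> s s' s_lt s'_lt /path_inj vv; apply: w_inj => //; apply: vv; apply: w_le.
  - by move=> s s_lt vz; apply: z_off_path; exists (w s) => //; apply: w_le.
  - move=> s1 s1' s2 s2' ss1 ss2 /(w_chord _ _ ss1) c1 /(w_chord _ _ ss2) c2.
    have [/w_inj e1 /w_inj e2] := chord_unique c1 c2.
    by split; [apply: e1 | apply: e2]; arith.
  - move=> s s1 s1' s_int zs ss1; apply/negP => /(w_chord _ _ ss1).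
    exact: z_chord_excl zs ss1.
case=> [|s] s_lt; [by right | left]; exists (w s) => //; exact: w_le.
Qed.

Lemma hole_obstruction i j :
  i < j <= p -> nbr i -> nbr j -> odd (j - i) -> 3 <= j - i ->
  (forall x y, i < x < j -> i < y < j -> nbr x -> nbr y -> x = y) ->
  (forall x x1 y1, i < x < j -> nbr x -> i <= x1 -> y1 <= j ->
     ~ path_chord e v p x1 y1) ->
  has_meyniel_obstruction.
Proof.
move=> ij z_i z_j odd_ij ij_ge3 z_chord_unique z_chord_excl.
apply: (@subpath_obstruction (fun s => i + s) (j - i).+1) => /=.
- by move=> s; arith.
- by move=> s s'; arith.
- by move=> s s_lt; rewrite addnS; apply: path_edge; arith.
- by rewrite addn0.
- by rewrite subnKC //; arith.
- by move: odd_ij; arith.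
- by arith.
- by move=> s s' s_int s'_int /z_chord_unique zz /zz; arith.
- move=> s s1 s1' s_int /z_chord_excl excl ss1; apply: excl; arith.
Qed.

Lemma hole_free i j :
  i < j <= p -> nbr i -> nbr j -> odd (j - i) -> 3 <= j - i ->
  (forall y, i < y < j -> ~~ nbr y) -> has_meyniel_obstruction.
Proof.
move=> ij z_i z_j odd_ij ij_ge3 no_nbr.
apply: (@hole_obstruction i j) => // [x y x_int _ | x x1 y1 x_int];
  by rewrite (negbTE (no_nbr x x_int)).
Qed.

Lemma hole_single i j x :
  i < j <= p -> nbr i -> nbr j -> odd (j - i) -> 3 <= j - i ->
  (forall y, i < y < j -> nbr y -> y = x) ->
  (forall x1 y1, i <= x1 -> y1 <= j -> ~ path_chord e v p x1 y1) ->
  has_meyniel_obstruction.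
Proof.
move=> ij z_i z_j odd_ij ij_ge3 only_x no_chord.
apply: (@hole_obstruction i j) => // [y y' y_int y'_int z_y z_y'|*]; last exact: no_chord.
by rewrite (only_x y) // (only_x y').
Qed.

Lemma shortcut_obstruction i j t x :
  i < t < j -> j <= p -> e (v t.-1) (v t.+1) -> nbr i -> nbr j ->
  ~~ odd (j - i) -> 4 <= j - i ->
  (forall y, i < y < j -> y != t -> nbr y -> y = x) ->
  has_meyniel_obstruction.
Proof.
move=> itj j_le shortcut z_i z_j even_ij ij_ge4 only_x.
have t_chord : path_chord e v p t.-1 t.+1 by split=> //; arith.
pose w s := if i + s < t then i + s else (i + s).+1.
have wE s : (i + s < t /\ w s = i + s) \/ (t <= i + s /\ w s = (i + s).+1).
  by rewrite /w; case: ltnP; [left | right].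
apply: (@subpath_obstruction w (j - i)).
- by move=> s; case: (wE s); arith.
- by move=> s s'; case: (wE s); case: (wE s'); arith.
- move=> s s_lt; case: (wE s) => -[s_t ->]; case: (wE s.+1) => -[s1_t ->]; try arith.
  + by rewrite addnS; apply: path_edge; arith.
  + by have [-> ->] : i + s = t.-1 /\ (i + s.+1).+1 = t.+1 by arith.
  + by rewrite addnS; apply: path_edge; arith.
- by case: (wE 0) => -[? ->]; rewrite addn0 //; arith.
- case: (wE (j - i).-1) => -[? ->]; first arith.
  by have -> : (i + (j - i).-1).+1 = j by arith.
- by [].
- by [].
- move=> s s' s_int s'_int z_s z_s'.
  case: (wE s) (wE s') z_s z_s' => -[? ->] [[? ->]|[? ->]] /only_x z_s /only_x z_s';
  by move: z_s z_s'; arith.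
- move=> s s1 s1' _ _ ss1 /(chord_unique t_chord).
  by case: (wE s1); case: (wE s1'); arith.
Qed.

Hypothesis chord_shape : forall i j, path_chord e v p i j ->
  exists t, [/\ 0 < t, t < p.-1, i = t.-1 & j = t.+1].
Hypothesis z_first : nbr 0.
Hypothesis z_last : nbr p.
Hypothesis p_odd : odd p.
Hypothesis p_ge3 : 3 <= p.

Lemma next_nbr n : n < p ->
  exists d, [/\ n < d <= p, nbr d & forall y, n < y < d -> ~~ nbr y].
Proof. exact: ex_first_after. Qed.

Lemma prev_nbr n : 0 < n ->
  exists a, [/\ a < n, nbr a & forall y, a < y < n -> ~~ nbr y].
Proof. exact: ex_last_before. Qed.

Lemma chord_skip x y : path_chord e v p x y -> y = x.+2 /\ x.+2 < p.
Proof. by move=> /chord_shape[t [t_gt0 t_lt -> ->]]; arith. Qed.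

Lemma first_odd_nbr : exists a b,
  [/\ a < b <= p, ~~ odd a, odd b, nbr a & nbr b] /\
  (forall y, a < y < b -> ~~ nbr y) /\ (forall y, y < b -> odd y -> ~~ nbr y).
Proof.
have exP : exists n, (fun n => odd n && nbr n) n by exists p; rewrite p_odd z_last.
have [b /andP[b_odd z_b] b_min] := ex_minnP exP.
have odd_free y : y < b -> odd y -> ~~ nbr y.
  move=> y_lt y_odd; apply/negP => z_y.
  by have := b_min y; rewrite y_odd z_y => /(_ isT); arith.
have [a [a_lt z_a gap]] := prev_nbr (odd_gt0 b_odd).
exists a, b; split=> //; split=> //; last by apply/negP => /(odd_free a a_lt); rewrite z_a.
by rewrite a_lt b_min // p_odd z_last.
Qed.

Lemma start_triangle_type2 :
  nbr 1 -> path_chord e v p 1 3 -> ~~ nbr 3 -> has_meyniel_obstruction.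
Proof.
move=> z_1 chord13 nz_3; have [_ lt_3p] := chord_skip chord13.
have [d [d_range z_d gap]] := next_nbr (ltnW lt_3p).
have d_ge4 : 4 <= d by case: (d =P 3) z_d => [->|]; [rewrite (negbTE nz_3) | arith].
have e13 : e (v 2.-1) (v 2.+1) by case: chord13.
have [d_odd | d_even] := boolP (odd d).
  case: (boolP (nbr 2)) => z_2.
    by apply: (@hole_free 2 d) => //; arith.
  apply: (@shortcut_obstruction 1 d 2 2) => //; [arith.. |].
  by move=> y y_int y_ne2; rewrite (negbTE (gap y _)) //; arith.
apply: (@shortcut_obstruction 0 d 2 1) => //; [arith.. |].
move=> y /andP[y_gt0 y_lt] y_ne2 z_y; case: (ltnP 2 y) => [y_gt2 | ]; last arith.
by move: z_y; rewrite (negbTE (gap y _)) // y_gt2.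
Qed.

Lemma start_triangle_type4 :
  nbr 1 -> ~ path_chord e v p 0 2 -> ~ path_chord e v p 1 3 -> ~~ nbr 2 ->
  has_meyniel_obstruction.
Proof.
move=> z_1 no02 no13 nz_2.
have [c [c_range z_c gap]] := next_nbr (ltnW p_ge3).
have c_ge3 : 3 <= c by case: (c =P 2) z_c => [->|]; [rewrite (negbTE nz_2) | arith].
have [c_odd | c_even] := boolP (odd c); last by apply: (@hole_free 1 c) => //; arith.
case: (classic (exists x y, y <= c /\ path_chord e v p x y)).
  move=> [x [y [y_le chord]]].
  have [y_eq _] := chord_skip chord; subst y.
  have x_gt1 : 1 < x by case: x chord {y_le} => [/no02 [] | [/no13 [] |]].
  have e_skip : e (v x.+1.-1) (v x.+2) by case: chord.
  apply: (@shortcut_obstruction 1 c x.+1 2) => //; [arith.. |].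
  by move=> y y_int _ z_y; move: z_y; rewrite (negbTE (gap y y_int)).
move=> no_chord; apply: (@hole_single 0 c 1) => //; [arith.. | |].
- move=> y /andP[y_gt0 y_lt] z_y; case: (ltnP 1 y) => [y_gt1 |]; last arith.
  by move: z_y; rewrite (negbTE (gap y _)) // y_gt1.
- by move=> x y _ y_le chord; apply: no_chord; exists x, y.
Qed.

Lemma triangle_chord_obstruction a a1 :
  a1 < a -> ~~ odd a1 -> ~~ odd a -> nbr a1 -> nbr a -> nbr a.+1 ->
  (forall y, a1 < y < a -> ~~ nbr y) -> path_chord e v p a.-1 a.+1 ->
  has_meyniel_obstruction.
Proof.
move=> a1_lt a1_even a_even z_a1 z_a z_a' gap chord.
have lt_ap : a.+1 < p by have [_] := chord_skip chord; arith.
have [d [d_range z_d gap_d]] := next_nbr lt_ap.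
have e_skip : e (v a.-1) (v a.+1) by case: chord.
case: (d =P a.+2) => [d_eq | d_ne].
  subst d; apply: (@shortcut_obstruction a1 a.+2 a a.+1) => //; [arith.. |].
  move=> y /andP[y_gt y_lt] y_ne z_y; case: (ltnP y a) => [y_lt_a |]; last arith.
  by move: z_y; rewrite (negbTE (gap y _)) // y_gt.
have [d_odd | d_even] := boolP (odd d); last by apply: (@hole_free a.+1 d) => //; arith.
apply: (@hole_single a d a.+1) => //; [arith.. | |].
- move=> y /andP[y_gt y_lt] z_y; case: (ltnP a.+1 y) => [y_gt' |]; last arith.
  by move: z_y; rewrite (negbTE (gap_d y _)) // y_gt'.
- by move=> x y x_ge y_le /(chord_unique chord) [x_eq _]; arith.
Qed.

Lemma chord_before_triangle_obstruction a a1 x :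
  a1 < a <= p -> ~~ odd a1 -> ~~ odd a -> nbr a1 -> nbr a ->
  (forall y, a1 < y < a -> ~~ nbr y) -> (forall y, y < a -> odd y -> ~~ nbr y) ->
  (path_chord e v p 0 2 -> nbr 2 -> False) ->
  a1 <= x -> x.+2 <= a -> path_chord e v p x x.+2 ->
  has_meyniel_obstruction.
Proof.
move=> a_range a1_even a_even z_a1 z_a gap odd_free no_start_chord x_ge x_le chord.
have e_skip : e (v x.+1.-1) (v x.+2) by case: chord.
have [far | near] := leqP 4 (a - a1).
  apply: (@shortcut_obstruction a1 a x.+1 x.+1) => //; [arith.. |].
  by move=> y y_int _ z_y; move: z_y; rewrite (negbTE (gap y y_int)).
have [x_eq a_eq] : x = a1 /\ a = a1.+2 by arith.
subst x a.
have a1_gt0 : 0 < a1.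
  by case: (posnP a1) => // a1_0; subst a1; case: (no_start_chord chord z_a).
have [a2 [a2_lt z_a2 gap2]] := prev_nbr a1_gt0.
have a2_even : ~~ odd a2 by apply: contraL z_a2; apply: odd_free; arith.
apply: (@shortcut_obstruction a2 a1.+2 a1.+1 a1) => //; [arith.. |].
move=> y /andP[y_gt y_lt] y_ne z_y; case: (ltnP y a1) => [y_lt1 |]; last arith.
by move: z_y; rewrite (negbTE (gap2 y _)) // y_gt.
Qed.

Lemma triangle_obstruction a :
  0 < a -> a.+1 <= p -> ~~ odd a -> nbr a -> nbr a.+1 ->
  (forall y, y < a -> odd y -> ~~ nbr y) -> (path_chord e v p 0 2 -> nbr 2 -> False) ->
  has_meyniel_obstruction.
Proof.
move=> a_gt0 a_lt a_even z_a z_a' odd_free no_start_chord.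
have [a1 [a1_lt z_a1 gap]] := prev_nbr a_gt0.
have a1_even : ~~ odd a1 by apply: contraL z_a1; apply: odd_free.
case: (classic (exists x y, [/\ a1 <= x, y <= a.+1 & path_chord e v p x y])).
  move=> [x [y [x_ge y_le chord]]]; have [y_eq _] := chord_skip chord; subst y.
  have [x_le | x_eq] : x.+2 <= a \/ x = a.-1 by arith.
    by apply: (@chord_before_triangle_obstruction a a1 x) => //; arith.
  subst x; rewrite prednK // in chord.
  exact: (@triangle_chord_obstruction a a1).
move=> no_chord; apply: (@hole_single a1 a.+1 a) => //; [arith.. | |].
- move=> y /andP[y_gt y_lt] z_y; case: (ltnP y a) => [y_lt_a |]; last arith.
  by move: z_y; rewrite (negbTE (gap y _)) // y_gt.
- by move=> x y x_ge y_le chord; apply: no_chord; exists x, y.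
Qed.

(* These two hypotheses are all that the four types are needed for. *)
Lemma meyniel_of_near_obstruction :
  (path_chord e v p 0 2 -> nbr 2 -> False) ->
  (nbr 1 -> path_chord e v p 1 3 /\ ~~ nbr 3 \/
            [/\ ~ path_chord e v p 0 2, ~ path_chord e v p 1 3 & ~~ nbr 2]) ->
  has_meyniel_obstruction.
Proof.
move=> no_start_chord start_type.
have [a [b [[ab a_even b_odd z_a z_b] [gap odd_free]]]] := first_odd_nbr.
have [b_far | b_near] := ltnP a.+1 b; first by apply: (@hole_free a b) => //; arith.
have b_eq : b = a.+1 by arith.
subst b; case: (posnP a) => [a0 | a_gt0].
  subst a; case: (start_type z_b) => [[chord13 nz_3] | [no02 no13 nz_2]].
  - exact: start_triangle_type2.
  - exact: start_triangle_type4.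
apply: (@triangle_obstruction a) => //; first arith.
by move=> y y_lt; apply: odd_free; arith.
Qed.

End NearObstruction.

Theorem lemma2 (T : finType) (e : rel T)
  (e_sym : symmetric e) (e_irr : irreflexive e)
  (v : nat -> T) (p : nat) (z : T) :
  near_obstruction e v p z ->
  exists (c : nat -> T) (k : nat),
    meyniel_obstruction e c k /\
    (forall i, i < k -> on_path v p (c i) \/ c i = z).
Proof.
move=> [[path_inj path_edge] p_ge3 p_odd
          [chord_unique chord_shape [z_off z_first z_last] type]].
apply: (meyniel_of_near_obstruction e_sym path_inj path_edge z_off chord_unique chord_shape
          z_first z_last p_odd p_ge3).
- move=> chord02 z_2.
  case: type => [[_ _ nz_2] | [[_ only13] _] | [no02 _] | [no02 _ _ _]] //.
  + by rewrite z_2 in nz_2.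
  + by have [] := only13 _ _ chord02.
- move=> z_1; case: type => [[_ nz_1 _] | [[chord13 _] nz] | [_ nz_1] | [no02 no13 _ nz_2]].
  + by rewrite z_1 in nz_1.
  + by left; split=> //; case: nz => //; rewrite z_1.
  + by rewrite z_1 in nz_1.
  + by right.
Qed.
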